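(* Let $N\ge 1$ be an integer and $\sigma>0$. Define $$Z_2(\sigma)=\frac{C_{N,2}(\sigma)}{(2\pi)^N N!}\int_{\mathbb{R}_+^N}\prod_{i=1}^N \exp\!\Big(-\frac{\log^2(u_i)}{2\sigma^2}\Big)\,|\Delta(u)|^{2}\prod_{i=1}^N du_i,\qquad C_{N,2}(\sigma)=\frac{\omega_2(N)(2\pi)^N}{2^{N^2}}\exp\!\Big(-N^3\frac{\sigma^2}{2}\Big).$$ Then $$Z_2(\sigma)=\frac{\omega_2(N)}{2^{N^2}}\,(2\pi\sigma^2)^{N/2}\exp\!\Big((N^3-N)\frac{\sigma^2}{6}\Big)\prod_{k=1}^{N-1}\big(1-e^{-k\sigma^2}\big)^{N-k}.$$ Equivalently, $$\int_{\mathbb{R}_+^N}\prod_{i=1}^N e^{-\log^2(u_i)/(2\sigma^2)}\,\Delta(u)^2\prod_i du_i = N!\,(2\pi\sigma^2)^{N/2}\exp\!\Big(\frac{N^3\sigma^2}{2}+\frac{(N^3-N)\sigma^2}{6}\Big)\prod_{k=1}^{N-1}(1-e^{-k\sigma^2})^{N-k}.$$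
   Context: $\Delta(u)=\prod_{i<j}(u_i-u_j)$ is the Vandermonde determinant of $u=(u_1,\dots,u_N)$, and $\mathbb{R}_+=(0,\infty)$. $\omega_2(N)>0$ is a constant depending only on $N$ (a normalization constant of the Riemannian volume), which appears as the same factor on both sides. $Z_2(\sigma)$ so defined is the partition function $\int \exp(-d(x,\bar x)^2/(2\sigma^2))\,d\mathrm{vol}(x)$ of the Riemannian Gaussian distribution on the space $\mathcal{P}_{\mathbb{C}}(N)\cong \mathrm{GL}(N,\mathbb{C})/\mathrm{U}(N)$ of Hermitian positive definite $N\times N$ matrices. *)

From mathcomp Require Import all_boot all_order all_algebra.
From mathcomp Require Import all_classical all_reals all_analysis.
Set Implicit Arguments. Unset Strict Implicit. Unset Printing Implicit Defensive.
Import Order.TTheory GRing.Theory Num.Theory.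
Local Open Scope classical_set_scope.
Local Open Scope ring_scope.

Definition vandermonde (R : pzRingType) (u : seq R) : R :=
  \prod_(i < size u) \prod_(j < size u | (i < j)%N) (u`_i - u`_j).

Fixpoint iter_int (R : realType) (n : nat) : (seq R -> \bar R) -> \bar R :=
  match n with
  | 0 => fun f => f [::]
  | n'.+1 => fun f =>
      (\int[@lebesgue_measure R]_(x in `]0%R, +oo[)
         iter_int n' (fun s => f (x :: s)))%E
  end.

Definition Z2_integrand (R : realType) (sigma : R) (u : seq R) : R :=
  (\prod_(x <- u) expR (- (ln x ^+ 2) / (2 * sigma ^+ 2)))
  * `|vandermonde u| ^+ 2.

Definition C_N2 (R : realType) (omega : R) (N : nat) (sigma : R) : R :=
  omega * (2 * pi) ^+ N / 2 ^+ (N ^ 2) * expR (- (N ^ 3)%:R * sigma ^+ 2 / 2).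

(* Z_2(sigma), with omega standing for omega_2(N) > 0. *)
Definition Z2 (R : realType) (omega : R) (N : nat) (sigma : R) : \bar R :=
  ((C_N2 omega N sigma / ((2 * pi) ^+ N * N`!%:R))%:E
   * iter_int N (fun u => (Z2_integrand sigma u)%:E))%E.

From mathcomp Require Import all_boot all_order all_algebra all_fingroup.
From mathcomp Require Import all_classical all_reals all_analysis.
From mathcomp Require Import measurable_realfun ring lra.
Import Order.TTheory GRing.Theory Num.Theory.
Import numFieldNormedType.Exports.
Local Open Scope classical_set_scope.
Local Open Scope ring_scope.

(* The proof is a Heine/Andreief computation.
   1. Expanding both Vandermonde determinants in Delta(u)^2 writes the integrand
      as a signed double sum over permutations p, q of separable products
      prod_i w(u_i) u_i^(p_i + q_i), where w is the lognormal weight.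
   2. The iterated integral of such a sum is the same sum with every factor
      replaced by the lognormal moment m_k = int_0^oo w(x) x^k dx, which the
      substitution x = e^t turns into a Gaussian integral:
      m_k = sqrt(2 pi sigma^2) exp((k+1)^2 sigma^2 / 2).
   3. Reindexing the permutation sum gives N! det[m_(i+j)], a Hankel determinant.
   4. Since m_(i+j) = a_i y_i^j b_j with geometric nodes y_i = e^((i+1) sigma^2),
      the Hankel matrix is a Vandermonde matrix with rescaled rows and columns,
      and its node differences factor into powers of the nodes times the terms
      (1 - e^(-k sigma^2)). *)

Section algebra.
Variable R : comPzRingType.

Lemma prod_upper_triangle (F : nat -> nat -> R) N :
  \prod_(i < N) \prod_(j < N | (i < j)%N) F i j = \prod_(j < N) \prod_(i < j) F i j.
Proof.
elim: N => [|N IH]; first by rewrite !big_ord0.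
rewrite big_ord_recr /= [RHS]big_ord_recr /= -IH.
rewrite [X in _ * X]big_pred0 => [|j]; last by rewrite ltnNge leq_ord.
rewrite mulr1 -big_split /=; apply: eq_bigr => i _.
by rewrite big_mkcond big_ord_recr /= ltn_ord -big_mkcond.
Qed.

Lemma prod_triangle_gaps (f : nat -> R) N :
  \prod_(j < N) \prod_(i < j) f (j - i)%N = \prod_(1 <= k < N) f k ^+ (N - k).
Proof.
elim: N => [|N IH]; first by rewrite big_ord0 big_geq.
rewrite big_ord_recr /= IH.
have -> : \prod_(i < N) f (N - i)%N = \prod_(1 <= k < N.+1) f k.
  by rewrite big_rev_mkord subn1 /=; apply: eq_bigr => i _; rewrite subSS.
case: N IH => [|N] IH; first by rewrite !big_geq // mul1r.
rewrite !(big_nat_recr N.+1) //= mulrA subSnn expr1 -big_split /=.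
congr (_ * _); apply: eq_big_nat => k /andP[_ kN].
by rewrite (subSn (ltnW kN)) exprS mulrC.
Qed.

Lemma prod_pairwise_diff_factor (y f : nat -> R) N :
  (forall i j, (i < j)%N -> y j - y i = y j * f (j - i)%N) ->
  \prod_(i < N) \prod_(j < N | (i < j)%N) (y j - y i) =
  \prod_(j < N) y j ^+ j * \prod_(1 <= k < N) f k ^+ (N - k).
Proof.
move=> yB; rewrite (prod_upper_triangle (fun i j => y j - y i)).
rewrite -prod_triangle_gaps -big_split; apply: eq_bigr => j _ /=.
rewrite (eq_bigr (fun i : 'I_j => y j * f (j - i)%N)) => [|i _]; last exact: yB.
by rewrite big_split /= prodr_const card_ord.
Qed.

Lemma det_scaled_vandermonde (a y b : nat -> R) N :
  \det (\matrix_(i < N, j < N) (a i * y i ^+ j * b j)) =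
  \prod_(i < N) a i * \prod_(j < N) b j *
  \prod_(i < N) \prod_(j < N | (i < j)%N) (y j - y i).
Proof.
set V := Vandermonde N (\row_(i < N) y i).
have -> : \matrix_(i < N, j < N) (a i * y i ^+ j * b j) =
    diag_mx (\row_i a i) *m V^T *m diag_mx (\row_j b j).
  by apply/matrixP => i j; rewrite mul_mx_diag mul_diag_mx !mxE.
rewrite !det_mulmx !det_diag det_tr det_Vandermonde mulrAC.
congr (_ * _ * _); apply: eq_bigr => i _; rewrite ?mxE //.
by apply: eq_bigr => j _; rewrite !mxE.
Qed.

Lemma vandermonde_sqr_perm_sum n (u : seq R) : size u = n ->
  vandermonde u ^+ 2 = \sum_(pq : 'S_n * 'S_n)
    ((-1) ^+ pq.1 * (-1) ^+ pq.2) * \prod_(i < n) u`_i ^+ (pq.1 i + pq.2 i).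
Proof.
move=> <-; set V := Vandermonde (size u) (\row_(j < size u) u`_j).
have -> : vandermonde u ^+ 2 = \det V ^+ 2.
  rewrite det_Vandermonde -!prodrXl; apply: eq_bigr => i _.
  by rewrite -!prodrXl; apply: eq_bigr => j _; rewrite !mxE -opprB sqrrN.
rewrite -det_tr /determinant expr2 big_distrlr /= pair_bigA.
apply: eq_bigr => -[p q] _ /=; rewrite mulrACA; congr (_ * _).
by rewrite -big_split; apply: eq_bigr => i _; rewrite !mxE exprD.
Qed.

Lemma perm_pair_sum_hankel n (m : nat -> R) :
  \sum_(pq : 'S_n * 'S_n) ((-1) ^+ pq.1 * (-1) ^+ pq.2) * \prod_(i < n) m (pq.1 i + pq.2 i)%N
  = n`!%:R * \det (\matrix_(i < n, j < n) m (i + j)%N).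
Proof.
rewrite -(pair_bigA _ (fun p q : 'S_n =>
  ((-1) ^+ p * (-1) ^+ q) * \prod_(i < n) m (p i + q i)%N)) /=.
rewrite mulr_natl -card_Sn -sumr_const; apply: eq_bigr => p _.
rewrite /determinant (reindex_inj (mulgI p)) /=; apply: eq_bigr => r _.
rewrite odd_permM signr_addb mulrA -expr2 sqrr_sign mul1r; congr (_ * _).
rewrite [RHS](reindex_inj (@perm_inj _ p)) /=.
by apply: eq_bigr => i _; rewrite permM !mxE.
Qed.

End algebra.

Section expR_substitution.
Variable R : realType.
Notation mu := (@lebesgue_measure R).

Let derive1_expR : (expR : R -> R)^`()%classic = expR.
Proof. by apply/funext => t; rewrite derive1E; apply: derive_val. Qed.

(* Exhaustions of (0, +oo) and of R that correspond to each other under expR. *)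
Let An (n : nat) : set R := `[expR (- n%:R), expR n%:R].
Let Bn (n : nat) : set R := `[- n%:R, n%:R].

Let An_sub n : An n `<=` `]0%R, +oo[.
Proof.
move=> x; rewrite /An /= !in_itv /= andbT => /andP[+ _].
exact/lt_le_trans/expR_gt0.
Qed.

Let nd_An : {homo An : n m / (n <= m)%N >-> (n <= m)%O}.
Proof.
move=> n m nm; rewrite subsetEset => x; rewrite /An /= !in_itv /= => /andP[x1 x2].
have le_nm : n%:R <= m%:R :> R by rewrite ler_nat.
by rewrite (le_trans _ x1) ?(le_trans x2) // ler_expR // lerN2.
Qed.

Let nd_Bn : {homo Bn : n m / (n <= m)%N >-> (n <= m)%O}.
Proof.
move=> n m nm; rewrite subsetEset => x; rewrite /Bn /= !in_itv /= => /andP[x1 x2].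
have le_nm : n%:R <= m%:R :> R by rewrite ler_nat.
by apply/andP; split; lra.
Qed.

Let bigcup_An : \bigcup_n An n = `]0%R, +oo[%classic.
Proof.
apply/seteqP; split => [x [n _ /An_sub]//|x].
rewrite /= in_itv /= andbT => x0; have xV0 : 0 < x^-1 by rewrite invr_gt0.
have := @archi_boundP R (x + x^-1) (addr_ge0 (ltW x0) (ltW xV0)).
set n := Num.Def.archi_bound _ => xn; exists n => //; rewrite /An /= in_itv /=.
have en := expR_ge1Dx (n%:R : R).
apply/andP; split; last by apply/ltW; lra.
by rewrite expRN -[x]invrK lef_pV2 ?posrE ?expR_gt0 //; apply/ltW; lra.
Qed.

Let bigcup_Bn : \bigcup_n Bn n = setT.
Proof.
apply/seteqP; split => // x _.
have := @archi_boundP R `|x| (normr_ge0 x).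
set n := Num.Def.archi_bound _ => xn; exists n => //; rewrite /Bn /= in_itv /=.
have := ler_norm x; have := ler_norm (- x); rewrite normrN.
by move=> *; apply/andP; split; lra.
Qed.

Variable f : R -> R.
Hypothesis f_continuous : forall x, 0 < x -> {for x, continuous f}.
Hypothesis f_ge0 : forall x, 0 < x -> 0 <= f x.

Let F (t : R) : R := f (expR t) * expR t.

Let F_continuous : continuous F.
Proof.
move=> t; apply: continuousM; last exact: continuous_expR.
exact: continuous_comp (@continuous_expR _ _) (f_continuous _ (expR_gt0 t)).
Qed.

Let integral_An n :
  (\int[mu]_(x in An n) (f x)%:E = \int[mu]_(t in Bn n) (F t)%:E)%E.
Proof.
rewrite (@integration_by_substitution_increasing _ expR f (- n%:R) n%:R).
- by apply: eq_integral => t _; rewrite derive1_expR.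
- by rewrite (@le_trans _ _ 0) ?oppr_le0 ?ler0n.
- by move=> x y _ _; rewrite ltr_expR.
- by rewrite derive1_expR => x _; exact: continuous_expR.
- by rewrite derive1_expR; apply/cvgP/cvg_at_right_filter/continuous_expR.
- by rewrite derive1_expR; apply/cvgP/cvg_at_left_filter/continuous_expR.
- split=> [x _||]; first exact: ex_derive.
  + exact/cvg_at_right_filter/continuous_expR.
  + exact/cvg_at_left_filter/continuous_expR.
- apply: continuous_in_subspaceT => x; rewrite inE /= in_itv /= => /andP[+ _].
  by move=> ex; apply: f_continuous; exact: lt_le_trans ex.
Qed.

(* Change of variables x = e^t for a continuous nonnegative function on
   (0, +oo), obtained from the compact case by monotone convergence along
   the exhaustions. *)
Lemma ge0_integral_itv0y_expR :
  (\int[mu]_(x in `]0%R, +oo[) (f x)%:E = \int[mu]_t (f (expR t) * expR t)%:E)%E.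
Proof.
have mf : measurable_fun (`]0%R, +oo[%classic : set R) f.
  apply: open_continuous_measurable_fun; first exact: interval_open.
  by move=> x; rewrite inE /= in_itv /= andbT; exact: f_continuous.
have cvgA : (\int[mu]_(x in An i) (f x)%:E)%E @[i --> \oo] -->
            (\int[mu]_(x in `]0%R, +oo[) (f x)%:E)%E.
  rewrite -bigcup_An; apply: ge0_nondecreasing_set_cvg_integral => //.
  - by move=> n; exact: measurable_itv.
  - by move=> n; apply/measurable_EFinP; apply: measurable_funS mf.
  - by move=> n x /An_sub; rewrite /= in_itv /= andbT => /f_ge0; rewrite lee_fin.
have cvgB : (\int[mu]_(t in Bn i) (F t)%:E)%E @[i --> \oo] --> (\int[mu]_t (F t)%:E)%E.
  rewrite -bigcup_Bn; apply: ge0_nondecreasing_set_cvg_integral => //.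
  - by move=> n; exact: measurable_itv.
  - move=> n; apply/measurable_EFinP; apply: measurable_funTS.
    exact: continuous_measurable_fun F_continuous.
  - by move=> n t _; rewrite lee_fin mulr_ge0 ?f_ge0 ?expR_ge0 ?expR_gt0.
rewrite -(cvg_lim _ cvgA) // -(cvg_lim _ cvgB) //.
by congr (lim (_ @ \oo)); apply/funext => n; exact: integral_An.
Qed.

End expR_substitution.

Section separable_iterated_integral.
Variables (R : realType) (g : nat -> R -> R) (m : nat -> R).
Notation mu := (@lebesgue_measure R).

Hypothesis g_integrable : forall k,
  mu.-integrable `]0%R, +oo[%classic (fun x => (g k x)%:E).
Hypothesis g_integral : forall k,
  (\int[mu]_(x in `]0%R, +oo[) (g k x)%:E = (m k)%:E)%E.

Lemma integral_lincomb (J : finType) (c : J -> R) (e : J -> nat) :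
  (\int[mu]_(x in `]0%R, +oo[) (\sum_j c j * g (e j) x)%:E =
   (\sum_j c j * m (e j))%:E)%E.
Proof.
have cg j : mu.-integrable `]0%R, +oo[%classic (fun x => (c j * g (e j) x)%:E).
  rewrite (_ : (fun x => _) = (fun x => (c j)%:E * (g (e j) x)%:E)%E).
    by apply: integrableZl => //; exact: g_integrable.
  by apply/funext => x; rewrite EFinM.
under eq_integral do rewrite -sumEFin.
rewrite integral_sum // -sumEFin; apply: eq_bigr => j _.
by under eq_integral do rewrite EFinM; rewrite integralZl // g_integral.
Qed.

Lemma iter_int_lincomb n (J : finType) (c : J -> R) (e : J -> 'I_n -> nat)
    (f : seq R -> R) :
  (forall u, size u = n -> (forall x, x \in u -> 0 < x) ->
     f u = \sum_j c j * \prod_(i < n) g (e j i) u`_i) ->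
  iter_int n (fun u => (f u)%:E) = (\sum_j c j * \prod_(i < n) m (e j i))%:E.
Proof.
elim: n J c e f => [|n IH] J c e f fE /=.
  by rewrite fE //; congr EFin; apply: eq_bigr => j _; rewrite !big_ord0.
transitivity (\int[mu]_(x in `]0%R, +oo[)
   (\sum_j (c j * \prod_(i < n) m (e j (lift ord0 i))) * g (e j ord0) x)%:E)%E.
  apply: eq_integral => x; rewrite inE /= in_itv /= andbT => x0.
  rewrite (IH J (fun j => c j * g (e j ord0) x) (fun j i => e j (lift ord0 i))).
    by congr EFin; apply: eq_bigr => j _; rewrite mulrAC.
  move=> s ns s0; rewrite fE /= ?ns // => [|y]; last first.
    by rewrite inE => /orP[/eqP->|/s0].
  by apply: eq_bigr => j _; rewrite big_ord_recl /= mulrA.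
rewrite integral_lincomb; congr EFin; apply: eq_bigr => j _.
by rewrite big_ord_recl /= mulrAC mulrA.
Qed.

End separable_iterated_integral.

(* The exponent bookkeeping of the lognormal Hankel determinant:
   sum_{j<N} ((j+1)^2/2 + j(j+1) + j^2/2) = (4N^3 - N)/6. *)
Lemma sum_hankel_exponents (R : numFieldType) N :
  \sum_(j < N) ((j.+1)%:R ^+ 2 / 2 + j%:R * (j.+1)%:R + j%:R ^+ 2 / 2)
  = (4 * N%:R ^+ 3 - N%:R) / 6 :> R.
Proof.
elim: N => [|N IH]; first by rewrite big_ord0 mulr0n expr0n /= mulr0 subr0 mul0r.
rewrite big_ord_recr /= IH; set u := N%:R; rewrite !mulrSr -/u.
by clearbody u; field.
Qed.

Section lognormal_moments.
Variables (R : realType) (sigma : R).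
Hypothesis sigma_gt0 : 0 < sigma.
Notation mu := (@lebesgue_measure R).

Definition log_gauss (k : nat) (x : R) : R :=
  expR (- (ln x ^+ 2) / (2 * sigma ^+ 2)) * x ^+ k.
Definition log_gauss_moment (k : nat) : R :=
  Num.sqrt (2 * pi * sigma ^+ 2) * expR ((k.+1)%:R ^+ 2 * sigma ^+ 2 / 2).

Let sigma_neq0 : sigma != 0. Proof. by rewrite gt_eqF. Qed.

Lemma integral_normal_fun m :
  (\int[mu]_x (normal_fun m sigma x)%:E = (normal_peak sigma)^-1%:E)%E.
Proof.
have peak_neq0 : normal_peak sigma != 0 by rewrite gt_eqF // normal_peak_gt0.
have := integral_normal_pdf m sigma.
under eq_integral do rewrite normal_pdfE // EFinM.
rewrite ge0_integralZl //; last 3 first.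
- by apply/measurable_EFinP; exact: measurable_normal_fun.
- by move=> x _; rewrite lee_fin normal_fun_ge0.
- by rewrite lee_fin normal_peak_ge0.
move=> /(congr1 (fun v => (normal_peak sigma)^-1%:E * v)%E).
by rewrite muleA -EFinM mulVf // mul1e mule1.
Qed.

(* Under x = e^t, x^k e^{-log^2 x/(2 sigma^2)} dx becomes a Gaussian in t
   centred at (k+1) sigma^2 (completing the square). *)
Lemma log_gauss_expR k t : log_gauss k (expR t) * expR t =
  expR ((k.+1)%:R ^+ 2 * sigma ^+ 2 / 2) * normal_fun ((k.+1)%:R * sigma ^+ 2) sigma t.
Proof.
rewrite /log_gauss /normal_fun expRK -expRM_natl -!expRD; congr expR.
by rewrite -[(k.+1)%:R]natr1 -mulr_natr; field.
Qed.

Lemma log_gauss_ge0 k x : 0 < x -> 0 <= log_gauss k x.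
Proof. by move=> x0; rewrite mulr_ge0 ?expR_ge0 ?exprn_ge0 ?ltW. Qed.

Lemma log_gauss_continuous k x : 0 < x -> {for x, continuous (log_gauss k)}.
Proof.
move=> x0; apply: continuousM; last exact: exprn_continuous.
apply: continuous_comp (@continuous_expR _ _); apply: continuousM; last first.
  exact: cst_continuous.
apply: continuousN.
exact: continuous_comp (continuous_ln x0) (@exprn_continuous _ 2 (ln x)).
Qed.

Lemma log_gauss_integral k :
  (\int[mu]_(x in `]0%R, +oo[) (log_gauss k x)%:E = (log_gauss_moment k)%:E)%E.
Proof.
rewrite ge0_integral_itv0y_expR; [|exact: log_gauss_continuous|exact: log_gauss_ge0].
under eq_integral do rewrite log_gauss_expR EFinM.
rewrite ge0_integralZl //; last 2 first.
- by apply/measurable_EFinP; exact: measurable_normal_fun.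
- by move=> x _; rewrite lee_fin normal_fun_ge0.
rewrite integral_normal_fun -EFinM /log_gauss_moment /normal_peak invrK mulrC.
by congr (_ * _)%:E; congr Num.sqrt; rewrite -mulr_natr; ring.
Qed.

Lemma log_gauss_integrable k :
  mu.-integrable `]0%R, +oo[%classic (fun x => (log_gauss k x)%:E).
Proof.
apply/integrableP; split.
  apply/measurable_EFinP; apply: open_continuous_measurable_fun.
    exact: interval_open.
  by move=> x; rewrite inE /= in_itv /= andbT; exact: log_gauss_continuous.
rewrite (_ : (\int[mu]_(x in _) _)%E = (log_gauss_moment k)%:E) ?ltry //.
rewrite -log_gauss_integral; apply: eq_integral => x.
by rewrite inE /= in_itv /= andbT => x0; rewrite ger0_norm // log_gauss_ge0.
Qed.

(* The moment m_{i+j} factors as a_i y_i^j b_j, so that the Hankel matrix of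
   moments is a Vandermonde matrix with rescaled rows and columns. *)
Let node (i : nat) : R := expR ((i.+1)%:R * sigma ^+ 2).
Let row_scale (i : nat) : R :=
  Num.sqrt (2 * pi * sigma ^+ 2) * expR ((i.+1)%:R ^+ 2 * sigma ^+ 2 / 2).
Let col_scale (j : nat) : R := expR (j%:R ^+ 2 * sigma ^+ 2 / 2).

Lemma log_gauss_moment_sep i j :
  log_gauss_moment (i + j) = row_scale i * node i ^+ j * col_scale j.
Proof.
rewrite /log_gauss_moment /row_scale /node /col_scale -expRM_natl -!mulrA.
congr (_ * _); rewrite -!expRD; congr expR.
by rewrite -addSn natrD; set u := (i.+1)%:R; set v := j%:R; clearbody u v; field.
Qed.

Lemma node_diff i j : (i < j)%N ->
  node j - node i = node j * (1 - expR (- (j - i)%N%:R * sigma ^+ 2)).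
Proof.
move=> ij; rewrite mulrBr mulr1 /node -expRD natrB ?(ltnW ij) //.
by congr (_ - expR _); ring.
Qed.

Lemma log_gauss_hankel_det N :
  expR (- (N ^ 3)%:R * sigma ^+ 2 / 2) *
    \det (\matrix_(i < N, j < N) log_gauss_moment (i + j)) =
  Num.sqrt (2 * pi * sigma ^+ 2) ^+ N * expR ((N ^ 3 - N)%:R * sigma ^+ 2 / 6) *
    \prod_(1 <= k < N) (1 - expR (- k%:R * sigma ^+ 2)) ^+ (N - k).
Proof.
under eq_mx do rewrite log_gauss_moment_sep.
rewrite det_scaled_vandermonde.
rewrite (@prod_pairwise_diff_factor _ node (fun k => 1 - expR (- k%:R * sigma ^+ 2)) N node_diff).
set P := \prod_(1 <= k < N) _.
have exps : \prod_(i < N) row_scale i * \prod_(j < N) col_scale j *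
    \prod_(j < N) node j ^+ j =
    Num.sqrt (2 * pi * sigma ^+ 2) ^+ N * expR (sigma ^+ 2 * ((4 * N%:R ^+ 3 - N%:R) / 6)).
  rewrite -sum_hankel_exponents mulr_sumr expR_sum big_split /= prodr_const card_ord.
  rewrite -!mulrA; congr (_ * _); rewrite -!big_split /=; apply: eq_bigr => j _.
  rewrite /node -expRM_natl -!expRD; congr expR.
  by set u := j%:R; rewrite !mulrSr -/u; clearbody u; field.
have N_le_N3 : (N <= N ^ 3)%N by case: (N) => // n; rewrite -{1}(expn1 n.+1) leq_pexp2l.
have exp_total : expR (- (N ^ 3)%:R * sigma ^+ 2 / 2) *
    expR (sigma ^+ 2 * ((4 * N%:R ^+ 3 - N%:R) / 6)) =
    expR ((N ^ 3 - N)%:R * sigma ^+ 2 / 6).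
  by rewrite -expRD natrB // natrX; congr expR; field.
by rewrite [_ * (_ * P)]mulrA exps -exp_total; ring.
Qed.

Lemma Z2_integrand_perm_sum n (u : seq R) : size u = n ->
  Z2_integrand sigma u = \sum_(pq : 'S_n * 'S_n)
    ((-1) ^+ pq.1 * (-1) ^+ pq.2) * \prod_(i < n) log_gauss (pq.1 i + pq.2 i) u`_i.
Proof.
move=> nu; rewrite /Z2_integrand (big_nth 0) nu big_mkord real_normK ?num_real //.
rewrite (vandermonde_sqr_perm_sum _ _ _ nu) mulr_sumr; apply: eq_bigr => pq _.
by rewrite mulrCA -big_split.
Qed.

End lognormal_moments.

Theorem proposition4 (R : realType) (N : nat) (omega sigma : R) :
  (1 <= N)%N -> 0 < omega -> 0 < sigma ->
  Z2 omega N sigma =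
  (omega / 2 ^+ (N ^ 2) * Num.sqrt (2 * pi * sigma ^+ 2) ^+ N
   * expR ((N ^ 3 - N)%:R * sigma ^+ 2 / 6)
   * \prod_(1 <= k < N) (1 - expR (- k%:R * sigma ^+ 2)) ^+ (N - k))%:E.
Proof.
move=> _ _ sigma_gt0.
rewrite /Z2 (@iter_int_lincomb _ _ _ (log_gauss_integrable _ _ sigma_gt0)
  (log_gauss_integral _ _ sigma_gt0) N ('S_N * 'S_N)%type
  (fun pq => (-1) ^+ pq.1 * (-1) ^+ pq.2)
  (fun pq i => pq.1 i + pq.2 i)%N (Z2_integrand sigma)); last first.
  by move=> u size_u _; exact: Z2_integrand_perm_sum.
rewrite perm_pair_sum_hankel -EFinM; congr EFin.
rewrite -![RHS]mulrA [_ ^+ N * (_ * _)]mulrA -(log_gauss_hankel_det _ sigma N) /C_N2.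
have pi2_neq0 : (2 * pi : R) ^+ N != 0 by rewrite expf_neq0 // mulf_neq0 // gt_eqF // pi_gt0.
have fact_neq0 : (N`!%:R : R) != 0 by rewrite pnatr_eq0 -lt0n fact_gt0.
by field; rewrite pi2_neq0 fact_neq0 expf_neq0.
Qed.
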